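(* There is an absolute constant $c>0$ such that the following holds. Let $\lambda>0$, $\delta\in(0,1)$, and assume $C_2<\infty$. Let $(\hat V,\hat\pi)$ be any SBEED output computed from the dataset $\mathcal D$ of size $n$. Writing $\iota=V_{\lambda,\max}^2\ln\frac{|\mathcal V||\mathcal P||\mathcal G|}{\delta}$, with probability at least $1-\delta$ over the draw of $\mathcal D$, $$J(\pi^\star)-J(\hat\pi)\le\frac{\lambda\ln|\mathcal A|}{1-\gamma}+\frac{c\sqrt{C_2}}{1-\gamma}\left(\sqrt{\epsilon_{\mathcal G,\mathcal V,\mathcal P}}+\sqrt{\epsilon_{\mathcal V,\mathcal P}}+\sqrt[4]{\frac{\iota}{n}\big(\epsilon_{\mathcal G,\mathcal V,\mathcal P}+\epsilon_{\mathcal V,\mathcal P}\big)}+\sqrt{\frac{\iota}{n}}\right).$$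
   Context: A finite MDP $(\mathcal S,\mathcal A,\gamma,P,R,d_0)$ with $\gamma\in[0,1)$, $P(\cdot\mid s,a)\in\Delta(\mathcal S)$, $R:\mathcal S\times\mathcal A\to[0,R_{\max}]$, $d_0\in\Delta(\mathcal S)$. For a policy $\pi$ and $\lambda\ge0$, $J_\lambda(\pi)=\mathbb E\big[\sum_{t\ge0}\gamma^t(R(s_t,a_t)-\lambda\ln\pi(a_t\mid s_t))\big]$ with $s_0\sim d_0$, $a_t\sim\pi(\cdot\mid s_t)$, $s_{t+1}\sim P(\cdot\mid s_t,a_t)$; $J=J_0$. $\pi^\star$ is a deterministic maximizer of $J$, $\pi^\star_\lambda$ the maximizer of $J_\lambda$. Occupancy $d^\pi(s)=(1-\gamma)\sum_t\gamma^t\Pr(s_t=s)$, $d^\pi(s,a)=d^\pi(s)\pi(a\mid s)$. $(\mathbb PV)(s,a)=\sum_{s'}P(s'\mid s,a)V(s')$; consistency operator $(\mathcal C^\pi_\lambda V)(s,a)=R(s,a)+\gamma(\mathbb PV)(s,a)-\lambda\ln\pi(a\mid s)$. Data distribution $\mu\in\Delta(\mathcal S\times\mathcal A)$, $\|f\|^2_{2,\mu}=\mathbb E_{\mu}[f(s,a)^2]$ (for $V$ depending only on $s$, $V-\mathcal C^\pi_\lambda V$ is the function $(s,a)\mapsto V(s)-(\mathcal C^\pi_\lambda V)(s,a)$). $V_{\lambda,\max}=(R_{\max}+\lambda\ln|\mathcal A|)/(1-\gamma)$. Finite function classes: $\mathcal V\subset[0,V_{\lambda,\max}]^{\mathcal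 S}$, $\mathcal P\subset\{\pi:\|\ln\pi\|_\infty\le V_{\lambda,\max}/\lambda\}$, $\mathcal G\subset[0,2V_{\lambda,\max}]^{\mathcal S\times\mathcal A}$. Dataset $\mathcal D=\{(s_i,a_i,r_i,s_i')\}_{i=1}^n$ with $(s_i,a_i)$ i.i.d. from $\mu$, $r_i=R(s_i,a_i)$, $s_i'\sim P(\cdot\mid s_i,a_i)$ independently. Empirical losses: $\mathscr L_{\mathcal D}(V;V,\pi)=\frac1n\sum_i\big(V(s_i)-r_i-\gamma V(s_i')+\lambda\ln\pi(a_i\mid s_i)\big)^2$ and $\mathscr R_{\mathcal D}(g;V,\pi)=\frac1n\sum_i\big(g(s_i,a_i)-r_i-\gamma V(s_i')+\lambda\ln\pi(a_i\mid s_i)\big)^2$. The SBEED output is $(\hat V,\hat\pi)\in\arg\min_{V\in\mathcal V,\pi\in\mathcal P}\max_{g\in\mathcal G}\big[\mathscr L_{\mathcal D}(V;V,\pi)-\mathscr R_{\mathcal D}(g;V,\pi)\big]$. Concentrability: $C_2=\max_{\pi\in\mathcal P\cup\{\pi^\star_\lambda\}}\|d^\pi/\mu\|^2_{2,\mu}$. Approximation errors: $\epsilon_{\mathcal V,\mathcal P}=\min_{V\in\mathcal V,\pi\in\mathcal P}\|V-\mathcal C^\pi_\lambda V\|^2_{2,\mu}$ and $\epsilon_{\mathcal G,\mathcal V,\mathcal P}=\max_{V\in\mathcal V,\pi\in\mathcal P}\min_{g\in\mathcal G}\|g-\mathcal C^\pi_\lambda V\|^2_{2,\mu}$. *)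

From HB Require Import structures.
From mathcomp Require Import all_boot all_order all_algebra.
From mathcomp Require Import all_classical all_reals all_analysis.
Set Implicit Arguments. Unset Strict Implicit. Unset Printing Implicit Defensive.
Import Order.TTheory GRing.Theory Num.Theory.
Local Open Scope ring_scope.

Section SBEED.
Variables (R : realType) (S A : finType).

(* policies / Q-like functions are curried finite functions S -> A -> R *)
Definition polT := {ffun S -> {ffun A -> R}}.
Definition valT := {ffun S -> R}.
Definition sample := (S * A * S)%type.
Definition dataset (n : nat) := {ffun 'I_n -> sample}.

Definition is_dist_S (d : S -> R) := (forall s, 0 <= d s) /\ \sum_s d s = 1.
Definition is_dist_A (d : A -> R) := (forall a, 0 <= d a) /\ \sum_a d a = 1.
Definition is_dist_SA (d : S -> A -> R) :=
  (forall s a, 0 <= d s a) /\ \sum_s \sum_a d s a = 1.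
Definition is_policy (pi : polT) := forall s, is_dist_A (pi s).
Definition is_kernel (P : S -> A -> S -> R) := forall s a, is_dist_S (P s a).
Definition is_deterministic (pi : polT) :=
  forall s, exists a0, forall a, pi s a = (a == a0)%:R.

Fixpoint state_dist (P : S -> A -> S -> R) (d0 : S -> R) (pi : polT) (t : nat)
  : S -> R :=
  match t with
  | 0 => d0
  | t'.+1 => fun s' => \sum_s \sum_a
      state_dist P d0 pi t' s * pi s a * P s a s'
  end.

(* J_lambda(pi) = E[sum_t gamma^t (R(s_t,a_t) - lambda ln pi(a_t|s_t))],
   written as the limit of the partial sums of the expected per-step terms *)
Definition J_lam (P : S -> A -> S -> R) (Rw : S -> A -> R) (d0 : S -> R)
  (gamma lam : R) (pi : polT) : R :=
  limn (fun N => \sum_(t < N) gamma ^+ t *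
     \sum_s \sum_a state_dist P d0 pi t s * pi s a * (Rw s a - lam * ln (pi s a))).

Definition J P Rw d0 gamma pi := J_lam P Rw d0 gamma 0 pi.

Definition occ_S P d0 (gamma : R) (pi : polT) (s : S) : R :=
  (1 - gamma) * limn (fun N => \sum_(t < N) gamma ^+ t * state_dist P d0 pi t s).
Definition occ P d0 gamma pi (s : S) (a : A) : R := occ_S P d0 gamma pi s * pi s a.

Definition PV (P : S -> A -> S -> R) (V : valT) (s : S) (a : A) : R :=
  \sum_s' P s a s' * V s'.
Definition cons_op P (Rw : S -> A -> R) (gamma lam : R) (pi : polT) (V : valT)
  (s : S) (a : A) : R := Rw s a + gamma * PV P V s a - lam * ln (pi s a).

Definition sqnorm (mu : S -> A -> R) (f : S -> A -> R) : R :=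
  \sum_s \sum_a mu s a * (f s a) ^+ 2.

Definition minl {T : Type} (d : T) (l : seq T) (f : T -> R) : R :=
  \big[Num.min/f (head d l)]_(x <- l) f x.
Definition maxl {T : Type} (d : T) (l : seq T) (f : T -> R) : R :=
  \big[Num.max/f (head d l)]_(x <- l) f x.

Definition V0 : valT := [ffun => 0].
Definition pol0 : polT := [ffun => [ffun => 0]].

Definition eps_VP P Rw mu gamma lam (Vs : seq valT) (Ps : seq polT) : R :=
  minl (V0, pol0) [seq (V, p) | V <- Vs, p <- Ps]
    (fun vp => sqnorm mu (fun s a => vp.1 s - cons_op P Rw gamma lam vp.2 vp.1 s a)).

Definition eps_GVP P Rw mu gamma lam (Vs : seq valT) (Ps : seq polT) (Gs : seq polT)
  : R :=
  maxl (V0, pol0) [seq (V, p) | V <- Vs, p <- Ps]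
    (fun vp => minl pol0 Gs
       (fun g => sqnorm mu (fun s a => g s a - cons_op P Rw gamma lam vp.2 vp.1 s a))).

(* concentrability: max over P u {pi*_lambda} of ||d^pi/mu||^2_{2,mu}
   (terms with mu(s,a) = 0 vanish; finiteness is a separate hypothesis) *)
Definition conc_term P d0 gamma (mu : S -> A -> R) (pi : polT) : R :=
  \sum_s \sum_a mu s a * (occ P d0 gamma pi s a / mu s a) ^+ 2.
Definition C2 P d0 gamma mu (Ps : seq polT) (pistar_lam : polT) : R :=
  maxl pol0 (pistar_lam :: Ps) (conc_term P d0 gamma mu).
Definition C2_finite P d0 gamma (mu : S -> A -> R) (Ps : seq polT) (pistar_lam : polT)
  : Prop :=
  forall pi, pi \in pistar_lam :: Ps ->
    forall s a, mu s a = 0 -> occ P d0 gamma pi s a = 0.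

Definition loss_L (Rw : S -> A -> R) (gamma lam : R) n (D : dataset n)
  (V : valT) (pi : polT) : R :=
  n%:R^-1 * \sum_(i < n)
    (V (D i).1.1 - Rw (D i).1.1 (D i).1.2 - gamma * V (D i).2
       + lam * ln (pi (D i).1.1 (D i).1.2)) ^+ 2.
Definition loss_R (Rw : S -> A -> R) (gamma lam : R) n (D : dataset n)
  (g : polT) (V : valT) (pi : polT) : R :=
  n%:R^-1 * \sum_(i < n)
    (g (D i).1.1 (D i).1.2 - Rw (D i).1.1 (D i).1.2 - gamma * V (D i).2
       + lam * ln (pi (D i).1.1 (D i).1.2)) ^+ 2.

Definition sbeed_obj Rw gamma lam n (D : dataset n) (Gs : seq polT)
  (V : valT) (pi : polT) : R :=
  maxl pol0 Gs (fun g => loss_L Rw gamma lam D V pi - loss_R Rw gamma lam D g V pi).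

Definition is_sbeed_output Rw gamma lam n (D : dataset n)
  (Vs : seq valT) (Ps : seq polT) (Gs : seq polT) (Vh : valT) (pih : polT) : Prop :=
  [/\ Vh \in Vs, pih \in Ps &
      forall V pi, V \in Vs -> pi \in Ps ->
        sbeed_obj Rw gamma lam D Gs Vh pih <= sbeed_obj Rw gamma lam D Gs V pi].

Definition data_prob (P : S -> A -> S -> R) (mu : S -> A -> R) n (D : dataset n) : R :=
  \prod_(i < n) (mu (D i).1.1 (D i).1.2 * P (D i).1.1 (D i).1.2 (D i).2).

Definition prob_event P mu n (E : dataset n -> Prop) : R :=
  \sum_(D : dataset n | `[< E D >]) data_prob P mu D.

End SBEED.

From HB Require Import structures.
From mathcomp Require Import all_boot all_order all_algebra.
From mathcomp Require Import all_classical all_reals all_analysis.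
From mathcomp Require Import ring lra zify.
Import Order.TTheory GRing.Theory Num.Theory.
Import numFieldNormedType.Exports.
Set Implicit Arguments. Unset Strict Implicit.
Local Open Scope ring_scope.

(* The proof separates a deterministic regret bound from a concentration
   argument, and the theorem holds with the constant c = 64.

   L^pi(s) = sum_t gamma^t
      Pr(s_t = s) exists, satisfies L = d0 + gamma P^pi L, has mass
      1/(1-gamma), and J_lambda(pi) is the L-weighted one-step payoff.
   2. Regret (section Regret).  The performance-difference identity, Gibbs'
      inequality and the entropy bound 0 <= H <= ln|A| give, for any V and any
      positive policy pih,
        J(pi_star) - J(pih) <= lambda ln|A|/(1-gamma)
                           + 2 sqrt(C_2)/(1-gamma) ||V - C^pih V||_{2,mu},
      the change of measure d^pi -> mu being Cauchy-Schwarz.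
   3. Concentration.  A Chernoff bound for i.i.d. sums of variables Z <= 1/2
      and the union bound.  The per-sample loss difference
      X = (V - y)^2 - (g - y)^2 has mean ||V - CV||^2 - ||g - CV||^2 and second
      moment <= 32 Vmax^2 times their sum, so outside a deviation event of
      probability exp(-ln(|V||P||G|/delta)) the empirical SBEED objective is
      within (f + h)/4 + 256 iota/n of its mean.
   4. SBEED analysis.  Outside |V||P||G| such events, comparing the objective
      of the SBEED output with that of the eps_{V,P}-minimizer yields
      ||V^ - C V^||^2 <= 2 (eps_G + eps_V) + 768 iota/n with probability
      1 - delta; step 2 turns this into the theorem. *)

Section FiniteSumLimits.
Local Open Scope classical_set_scope.

Lemma cvg_sum_fin (R : realType) (I : finType) (f : I -> nat -> R) (l : I -> R) :
  (forall i, f i n @[n --> \oo] --> l i) ->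
  (\sum_i f i n) @[n --> \oo] --> \sum_i l i.
Proof. by move=> fl; apply: cvg_big; [exact: add_continuous | move=> i _; exact: fl]. Qed.

Lemma cvg_sum2_fin (R : realType) (I J : finType) (f : I -> J -> nat -> R)
    (l : I -> J -> R) :
  (forall i j, f i j n @[n --> \oo] --> l i j) ->
  (\sum_i \sum_j f i j n) @[n --> \oo] --> \sum_i \sum_j l i j.
Proof. by move=> fl; apply: cvg_sum_fin => i; apply: cvg_sum_fin. Qed.
End FiniteSumLimits.

Lemma geometric_sum_le (R : realType) (gamma : R) (N : nat) : 0 <= gamma < 1 ->
  \sum_(t < N) gamma ^+ t <= (1 - gamma)^-1.
Proof.
case/andP=> g0 g1; have h1 : 0 < 1 - gamma by rewrite subr_gt0.
have E : (1 - gamma) * \sum_(t < N) gamma ^+ t = 1 - gamma ^+ N.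
  elim: N => [|N IH]; first by rewrite big_ord0 mulr0 expr0 subrr.
  by rewrite big_ord_recr /= mulrDr IH exprS; ring.
rewrite -(ler_pM2l h1) mulrV ?unitf_gt0 // E.
by rewrite lerBlDr lerDl exprn_ge0.
Qed.

Section Visitation.
Variables (R : realType) (S A : finType).
Variables (P : S -> A -> S -> R) (d0 : S -> R) (gamma : R) (pi : polT R S A).
Hypothesis hP : is_kernel P.
Hypothesis hd0 : is_dist_S d0.
Hypothesis hpi : is_policy pi.
Hypothesis hg : 0 <= gamma < 1.
Local Open Scope classical_set_scope.

Local Notation sd := (state_dist P d0 pi).

Lemma state_dist_ge0 t s : 0 <= sd t s.
Proof.
elim: t s => [|t IH] s /=; first by case: hd0.
apply: sumr_ge0 => s1 _; apply: sumr_ge0 => a _.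
apply: mulr_ge0; [apply: mulr_ge0 => //; by case: (hpi s1) | by case: (hP s1 a)].
Qed.

Lemma sum_policy_kernel (w : S -> R) :
  \sum_s \sum_a w s * pi s a * \sum_s'' P s a s'' = \sum_s w s.
Proof.
apply: eq_bigr => s _; transitivity (\sum_a w s * pi s a).
  by apply: eq_bigr => a _; case: (hP s a) => _ ->; rewrite mulr1.
by rewrite -mulr_sumr; case: (hpi s) => _ ->; rewrite mulr1.
Qed.

Lemma state_dist_sum1 t : \sum_s sd t s = 1.
Proof.
elim: t => [|t IH] /=; first by case: hd0.
rewrite exchange_big /= -[RHS]IH -sum_policy_kernel.
apply: eq_bigr => s _; rewrite exchange_big /=.
by apply: eq_bigr => a _; rewrite mulr_sumr.
Qed.

Definition visit_partial N s := \sum_(t < N) gamma ^+ t * sd t s.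

Lemma visit_partial_le N s : visit_partial N s <= (1 - gamma)^-1.
Proof.
apply: le_trans (geometric_sum_le N hg); apply: ler_sum => t _.
case/andP: hg => g0 _; rewrite -[X in _ <= X]mulr1 ler_wpM2l ?exprn_ge0 //.
rewrite -(state_dist_sum1 t) (bigD1 s) //= lerDl.
by apply: sumr_ge0 => *; apply: state_dist_ge0.
Qed.

Lemma visit_partial_cvg s : cvgn (visit_partial ^~ s).
Proof.
apply: nondecreasing_is_cvgn.
  apply/nondecreasing_seqP => N; rewrite /visit_partial big_ord_recr /= lerDl.
  case/andP: hg => g0 _; apply: mulr_ge0; [exact: exprn_ge0 | exact: state_dist_ge0].
by exists (1 - gamma)^-1 => _ [N _ <-]; apply: visit_partial_le.
Qed.

Definition visit s := limn (visit_partial ^~ s).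

Lemma visit_ge0 s : 0 <= visit s.
Proof.
apply: limr_ge; first exact: visit_partial_cvg.
near=> N; apply: sumr_ge0 => t _; case/andP: hg => g0 _.
apply: mulr_ge0; [exact: exprn_ge0 | exact: state_dist_ge0].
Unshelve. all: by end_near.
Qed.

Lemma visit_partial_flow N s' :
  visit_partial N.+1 s' =
  d0 s' + gamma * \sum_s \sum_a visit_partial N s * pi s a * P s a s'.
Proof.
rewrite /visit_partial big_ord_recl /= expr0 mul1r; congr (_ + _).
have -> : \sum_s \sum_a (\sum_(t < N) gamma ^+ t * sd t s) * pi s a * P s a s' =
          \sum_(t < N) \sum_s \sum_a gamma ^+ t * sd t s * pi s a * P s a s'.
  symmetry; rewrite exchange_big /=; apply: eq_bigr => s _.
  by rewrite exchange_big /=; apply: eq_bigr => a _; rewrite !mulr_suml.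
rewrite mulr_sumr; apply: eq_bigr => t _ /=.
rewrite /bump /= exprS -mulrA; congr (_ * _).
rewrite mulr_sumr; apply: eq_bigr => s _; rewrite mulr_sumr; apply: eq_bigr => a _.
by rewrite !mulrA.
Qed.

Lemma visit_flow s' :
  visit s' = d0 s' + gamma * \sum_s \sum_a visit s * pi s a * P s a s'.
Proof.
have h1 : (fun N => visit_partial N.+1 s') @ \oo --> visit s'.
  by rewrite (cvg_shiftS (visit_partial ^~ s')); apply: visit_partial_cvg.
have h2 : (fun N => visit_partial N.+1 s') @ \oo -->
          d0 s' + gamma * \sum_s \sum_a visit s * pi s a * P s a s'.
  under eq_fun do rewrite visit_partial_flow.
  apply: cvgD; first exact: cvg_cst.
  apply: cvgMr; apply: cvg_sum2_fin => s a.
  by apply: cvgMl; apply: cvgMl; apply: visit_partial_cvg.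
exact: (cvg_unique _ h1 h2).
Qed.

(* Summing the flow equation over states. *)
Lemma visit_mass : \sum_s visit s = (1 - gamma)^-1.
Proof.
have E : \sum_s visit s = 1 + gamma * \sum_s visit s.
  rewrite {1}(eq_bigr _ (fun s _ => visit_flow s)) big_split /=.
  case: hd0 => _ ->; congr (_ + _); rewrite -mulr_sumr; congr (_ * _).
  rewrite exchange_big /= -[in RHS]sum_policy_kernel.
  apply: eq_bigr => s _; rewrite exchange_big /=.
  by apply: eq_bigr => a _; rewrite mulr_sumr.
case/andP: hg => g0 g1.
have h1 : 1 - gamma != 0 by rewrite subr_eq0 eq_sym lt_eqF.
by apply: (mulfI h1); rewrite mulfV // mulrBl mul1r {1}E; ring.
Qed.

Lemma J_lam_visitE (Rw : S -> A -> R) lam :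
  J_lam P Rw d0 gamma lam pi =
  \sum_s \sum_a visit s * (pi s a * (Rw s a - lam * ln (pi s a))).
Proof.
rewrite /J_lam.
have -> : (fun N => \sum_(t < N) gamma ^+ t *
     \sum_s \sum_a sd t s * pi s a * (Rw s a - lam * ln (pi s a))) =
     (fun N => \sum_s \sum_a
        visit_partial N s * (pi s a * (Rw s a - lam * ln (pi s a)))).
  apply/funext => N; rewrite /visit_partial.
  under eq_bigr do rewrite mulr_sumr.
  rewrite exchange_big /=; apply: eq_bigr => s _.
  under eq_bigr do rewrite mulr_sumr.
  rewrite exchange_big /=; apply: eq_bigr => a _.
  by rewrite mulr_suml; apply: eq_bigr => t _; ring.
apply: cvg_lim => //; apply: cvg_sum2_fin => s a.
by apply: cvgMl; apply: visit_partial_cvg.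
Qed.

Lemma occ_visitE s a : occ P d0 gamma pi s a = (1 - gamma) * visit s * pi s a.
Proof. by []. Qed.
End Visitation.

Section Inequalities.
Variable R : realType.

(* The tangent-line bound of the concave logarithm at 1. *)
Lemma ln_le_subr1 (x : R) : 0 < x -> ln x <= x - 1.
Proof.
move=> x0; have := @le_ln1Dx R (x - 1) ltac:(lra).
by rewrite (_ : 1 + (x - 1) = x) //; ring.
Qed.

(* Summed over a, this bounds the entropy of a distribution by ln k. *)
Lemma entropy_term_le (p k : R) : 0 <= p -> 0 < k ->
  p * (- ln p - ln k) <= k^-1 - p.
Proof.
move=> p0 k0; have [->|pp] := eqVneq p 0; first by rewrite mul0r subr0 invr_ge0 ltW.
have p0' : 0 < p by rewrite lt_def pp.
have pk : 0 < p * k by apply: mulr_gt0.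
have -> : - ln p - ln k = ln ((p * k)^-1).
  by rewrite lnV ?posrE // lnM ?posrE // opprD.
apply: le_trans (ler_wpM2l p0 (ln_le_subr1 _)) _; first by rewrite invr_gt0.
by rewrite mulrBr mulr1 invfM mulrA mulfV // mul1r.
Qed.

(* Summed over a, this is Gibbs' inequality KL(q || p) >= 0. *)
Lemma gibbs_term_le (p q : R) : 0 < p -> 0 <= q -> q * (ln p - ln q) <= p - q.
Proof.
move=> p0 q0; have [->|qq] := eqVneq q 0; first by rewrite mul0r subr0 ltW.
have q0' : 0 < q by rewrite lt_def qq.
rewrite -ln_div ?posrE //.
apply: le_trans (ler_wpM2l q0 (ln_le_subr1 (divr_gt0 p0 q0'))) _.
by rewrite mulrBr mulr1 mulrC divfK.
Qed.

Lemma discriminant_le (a b c : R) :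
  (forall t, 0 <= t ^+ 2 * a - 2 * t * b + c) -> 0 <= a -> b ^+ 2 <= a * c.
Proof.
move=> H a0; have [a00|ap] := eqVneq a 0.
  have [b00|bn] := eqVneq b 0; first by rewrite b00 a00 expr0n /= mul0r.
  have := H ((c + 1) / (2 * b)).
  have -> : ((c + 1) / (2 * b)) ^+ 2 * a - 2 * ((c + 1) / (2 * b)) * b + c = -1.
    by rewrite a00; field; rewrite bn.
  by rewrite lerNr oppr0 ler10.
have a0' : 0 < a by rewrite lt_def ap.
have := H (b / a).
have -> : (b / a) ^+ 2 * a - 2 * (b / a) * b + c = c - b ^+ 2 / a by field.
by rewrite subr_ge0 ler_pdivrMr // mulrC.
Qed.

Lemma weighted_sqsum_ge0 (S A : finType) (w x : S -> A -> R) :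
  (forall s a, 0 <= w s a) -> 0 <= \sum_s \sum_a w s a * x s a ^+ 2.
Proof.
by move=> w0; apply: sumr_ge0 => s _; apply: sumr_ge0 => a _;
  apply: mulr_ge0 => //; apply: sqr_ge0.
Qed.

Lemma cauchy_schwarz2 (S A : finType) (w x y : S -> A -> R) :
  (forall s a, 0 <= w s a) ->
  `|\sum_s \sum_a w s a * x s a * y s a| <=
  Num.sqrt (\sum_s \sum_a w s a * x s a ^+ 2) *
  Num.sqrt (\sum_s \sum_a w s a * y s a ^+ 2).
Proof.
move=> w0.
have quad t : t ^+ 2 * (\sum_s \sum_a w s a * x s a ^+ 2)
    - 2 * t * (\sum_s \sum_a w s a * x s a * y s a)
    + \sum_s \sum_a w s a * y s a ^+ 2 =
    \sum_s \sum_a w s a * (t * x s a - y s a) ^+ 2.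
  rewrite !mulr_sumr -!sumrB -big_split /=; apply: eq_bigr => s _.
  rewrite !mulr_sumr -!sumrB -big_split /=; apply: eq_bigr => a _; ring.
have H : (\sum_s \sum_a w s a * x s a * y s a) ^+ 2 <=
    (\sum_s \sum_a w s a * x s a ^+ 2) * (\sum_s \sum_a w s a * y s a ^+ 2).
  apply: discriminant_le; last exact: weighted_sqsum_ge0.
  by move=> t; rewrite quad; apply: weighted_sqsum_ge0.
rewrite -sqrtrM ?weighted_sqsum_ge0 // -sqrtr_sqr ler_sqrt //.
by rewrite mulr_ge0 ?weighted_sqsum_ge0.
Qed.
End Inequalities.

Section Regret.
Variables (R : realType) (S A : finType).
Variables (P : S -> A -> S -> R) (d0 : S -> R) (gamma : R) (Rw : S -> A -> R).
Hypothesis hP : is_kernel P.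
Hypothesis hd0 : is_dist_S d0.
Hypothesis hg : 0 <= gamma < 1.

Local Notation L := (visit P d0 gamma).

Lemma performance_difference (pi : polT R S A) lam (V : valT R S) :
  is_policy pi ->
  J_lam P Rw d0 gamma lam pi = \sum_s d0 s * V s +
  \sum_s \sum_a L pi s * (pi s a * (cons_op P Rw gamma lam pi V s a - V s)).
Proof.
move=> hpi; rewrite (J_lam_visitE hP hd0 hpi hg).
set l := L pi.
have flow : \sum_s \sum_a l s * (pi s a * (gamma * PV P V s a)) =
            \sum_s (l s - d0 s) * V s.
  transitivity (\sum_s' \sum_s \sum_a gamma * l s * pi s a * P s a s' * V s').
    symmetry; rewrite exchange_big /=; apply: eq_bigr => s _.
    rewrite exchange_big /=; apply: eq_bigr => a _.
    by rewrite /PV !mulr_sumr; apply: eq_bigr => s' _; ring.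
  apply: eq_bigr => s' _.
  rewrite /l (visit_flow hP hd0 hpi hg s') -/l addrAC subrr add0r.
  rewrite -mulrA mulr_suml mulr_sumr; apply: eq_bigr => s _.
  by rewrite mulr_suml mulr_sumr; apply: eq_bigr => a _; ring.
have mass : \sum_s \sum_a l s * (pi s a * V s) = \sum_s l s * V s.
  apply: eq_bigr => s _; rewrite -mulr_sumr -mulr_suml.
  by case: (hpi s) => _ ->; rewrite mul1r.
have split : \sum_s \sum_a l s * (pi s a * (cons_op P Rw gamma lam pi V s a - V s)) =
  \sum_s \sum_a l s * (pi s a * (Rw s a - lam * ln (pi s a)))
   + \sum_s \sum_a l s * (pi s a * (gamma * PV P V s a))
   - \sum_s \sum_a l s * (pi s a * V s).
  rewrite -big_split -sumrB /=; apply: eq_bigr => s _.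
  by rewrite -big_split -sumrB /=; apply: eq_bigr => a _; rewrite /cons_op; ring.
rewrite split flow mass.
have -> : \sum_s (l s - d0 s) * V s = \sum_s l s * V s - \sum_s d0 s * V s.
  by rewrite -sumrB; apply: eq_bigr => s _; ring.
ring.
Qed.

Lemma policy_le1 (pi : polT R S A) s a : is_policy pi -> pi s a <= 1.
Proof.
move=> hpi; case: (hpi s) => h0 h1; rewrite -h1 (bigD1 a) //= lerDl.
by apply: sumr_ge0.
Qed.

Lemma entropy_bounds (pi : polT R S A) s : is_policy pi -> (0 < #|A|)%N ->
  0 <= \sum_a pi s a * (- ln (pi s a)) <= ln (#|A|%:R).
Proof.
move=> hpi hA; case: (hpi s) => h0 h1; apply/andP; split.
  apply: sumr_ge0 => a _; apply: mulr_ge0 => //.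
  by rewrite oppr_ge0; apply: ln_le0; apply: policy_le1.
have k0 : 0 < (#|A|%:R : R) by rewrite ltr0n.
rewrite -subr_le0.
have -> : \sum_a pi s a * - ln (pi s a) - ln #|A|%:R =
          \sum_a pi s a * (- ln (pi s a) - ln #|A|%:R).
  rewrite -[X in _ - X]mul1r -h1 mulr_suml -sumrB.
  by apply: eq_bigr => a _; ring.
apply: le_trans (ler_sum _ (fun a _ => entropy_term_le (h0 a) k0)) _.
rewrite sumrB sumr_const h1 (_ : #|xpredT| = #|A|) //.
by rewrite -[X in X - 1]mulr_natr mulVf ?subrr // lt0r_neq0.
Qed.

Lemma J_lam_entropy (pi : polT R S A) lam : is_policy pi ->
  J_lam P Rw d0 gamma lam pi = J P Rw d0 gamma pi +
   lam * \sum_s L pi s * \sum_a pi s a * (- ln (pi s a)).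
Proof.
move=> hpi; rewrite /J !(J_lam_visitE hP hd0 hpi hg) mulr_sumr -big_split /=.
apply: eq_bigr => s _; rewrite !mulr_sumr -big_split /=.
by apply: eq_bigr => a _; ring.
Qed.

Lemma J_le_J_lam (pi : polT R S A) lam : is_policy pi -> 0 <= lam ->
  (0 < #|A|)%N ->
  J P Rw d0 gamma pi <= J_lam P Rw d0 gamma lam pi <=
  J P Rw d0 gamma pi + lam * ln (#|A|%:R) / (1 - gamma).
Proof.
move=> hpi l0 hA; rewrite (J_lam_entropy _ hpi) lerDl lerD2l; apply/andP; split.
  apply: mulr_ge0 => //; apply: sumr_ge0 => s _; apply: mulr_ge0.
    exact: (visit_ge0 hP hd0 hpi hg).
  by case/andP: (entropy_bounds s hpi hA).
rewrite -mulrA ler_wpM2l // -(visit_mass hP hd0 hpi hg) mulrC mulr_suml.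
apply: ler_sum => s _; rewrite ler_wpM2l //; first exact: (visit_ge0 hP hd0 hpi hg).
by case/andP: (entropy_bounds s hpi hA).
Qed.

Lemma visit_occE (pi : polT R S A) (X : S -> A -> R) :
  \sum_s \sum_a L pi s * (pi s a * X s a) =
  (1 - gamma)^-1 * \sum_s \sum_a occ P d0 gamma pi s a * X s a.
Proof.
case/andP: hg => g0 g1; have h1 : 1 - gamma != 0 by rewrite subr_eq0 eq_sym lt_eqF.
rewrite mulr_sumr; apply: eq_bigr => s _; rewrite mulr_sumr; apply: eq_bigr => a _.
by rewrite occ_visitE; field.
Qed.

Lemma occ_change_measure (pi : polT R S A) (mu : S -> A -> R) (X : S -> A -> R) :
  (forall s a, 0 <= mu s a) ->
  (forall s a, mu s a = 0 -> occ P d0 gamma pi s a = 0) ->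
  `|\sum_s \sum_a occ P d0 gamma pi s a * X s a| <=
  Num.sqrt (conc_term P d0 gamma mu pi) * Num.sqrt (sqnorm mu X).
Proof.
move=> mu0 hsupp.
have -> : \sum_s \sum_a occ P d0 gamma pi s a * X s a =
   \sum_s \sum_a mu s a * (occ P d0 gamma pi s a / mu s a) * X s a.
  apply: eq_bigr => s _; apply: eq_bigr => a _.
  have [m0|mn] := eqVneq (mu s a) 0; first by rewrite m0 hsupp // !mul0r.
  by rewrite [mu s a * _]mulrC divfK.
exact: cauchy_schwarz2.
Qed.

(* Gibbs: evaluated against pis, the entropy-regularized consistency operator
   of any positive policy pih dominates that of pis itself. *)
Lemma gibbs_improvement (pis pih : polT R S A) (V : valT R S) lam s :
  is_policy pis -> is_policy pih -> (forall a, 0 < pih s a) -> 0 <= lam ->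
  \sum_a pis s a * (cons_op P Rw gamma lam pis V s a - V s) <=
  \sum_a pis s a * (cons_op P Rw gamma lam pih V s a - V s).
Proof.
move=> hs hh hpos l0; rewrite -subr_ge0 -sumrB.
have -> : \sum_a (pis s a * (cons_op P Rw gamma lam pih V s a - V s) -
                  pis s a * (cons_op P Rw gamma lam pis V s a - V s)) =
          - (lam * \sum_a pis s a * (ln (pih s a) - ln (pis s a))).
  by rewrite mulr_sumr -sumrN; apply: eq_bigr => a _; rewrite /cons_op; ring.
rewrite oppr_ge0 mulr_ge0_le0 //.
apply: le_trans (ler_sum _ (fun a _ => gibbs_term_le (hpos a) _)) _.
  by case: (hs s).
by case: (hs s) => _ h1; case: (hh s) => _ h2; rewrite sumrB h1 h2 subrr.
Qed.

Lemma soft_value_gap (pis pih : polT R S A) (V : valT R S) lam :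
  is_policy pis -> is_policy pih -> (forall s a, 0 < pih s a) -> 0 <= lam ->
  J_lam P Rw d0 gamma lam pis - J_lam P Rw d0 gamma lam pih <=
  (1 - gamma)^-1 *
  (\sum_s \sum_a occ P d0 gamma pis s a * (cons_op P Rw gamma lam pih V s a - V s)
   - \sum_s \sum_a occ P d0 gamma pih s a * (cons_op P Rw gamma lam pih V s a - V s)).
Proof.
move=> hs hh hpos l0.
have key : \sum_s \sum_a L pis s * (pis s a * (cons_op P Rw gamma lam pis V s a - V s))
        <= \sum_s \sum_a L pis s * (pis s a * (cons_op P Rw gamma lam pih V s a - V s)).
  apply: ler_sum => s _; rewrite -!mulr_sumr ler_wpM2l //.
    exact: (visit_ge0 hP hd0 hs hg).
  exact: gibbs_improvement.
rewrite (performance_difference lam V hs) (performance_difference lam V hh).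
rewrite mulrBr -!visit_occE; lra.
Qed.

Lemma regret_le_residual (pistar pistar_lam pih : polT R S A) (V : valT R S)
    lam (Cc : R) (mu : S -> A -> R) :
  is_policy pistar -> is_policy pistar_lam -> is_policy pih ->
  (forall s a, 0 < pih s a) -> 0 <= lam -> (0 < #|A|)%N ->
  J_lam P Rw d0 gamma lam pistar <= J_lam P Rw d0 gamma lam pistar_lam ->
  (forall s a, 0 <= mu s a) ->
  (forall s a, mu s a = 0 -> occ P d0 gamma pistar_lam s a = 0) ->
  (forall s a, mu s a = 0 -> occ P d0 gamma pih s a = 0) ->
  conc_term P d0 gamma mu pistar_lam <= Cc -> conc_term P d0 gamma mu pih <= Cc ->
  J P Rw d0 gamma pistar - J P Rw d0 gamma pih <=
  lam * ln (#|A|%:R) / (1 - gamma) + 2 * Num.sqrt Cc / (1 - gamma) *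
  Num.sqrt (sqnorm mu (fun s a => V s - cons_op P Rw gamma lam pih V s a)).
Proof.
move=> hs hsl hh hpos l0 hA Jmax mu0 sup1 sup2 C1 C2.
case/andP: hg => g0 g1.
set err := fun s a => cons_op P Rw gamma lam pih V s a - V s.
have errE : sqnorm mu (fun s a => V s - cons_op P Rw gamma lam pih V s a) =
    sqnorm mu err.
  by apply: eq_bigr => s _; apply: eq_bigr => a _; rewrite /err -sqrrN opprB.
rewrite errE; set f := Num.sqrt (sqnorm mu err).
have sC (pi : polT R S A) : conc_term P d0 gamma mu pi <= Cc ->
    Num.sqrt (conc_term P d0 gamma mu pi) * f <= Num.sqrt Cc * f.
  have Cc0 : 0 <= Cc := le_trans (weighted_sqsum_ge0 _ mu0) C1.
  by move=> Cpi; rewrite ler_wpM2r ?sqrtr_ge0 // ler_sqrt.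
have B1 := le_trans (occ_change_measure err mu0 sup1) (sC _ C1).
have B2 := le_trans (occ_change_measure err mu0 sup2) (sC _ C2).
have gap : J_lam P Rw d0 gamma lam pistar_lam - J_lam P Rw d0 gamma lam pih <=
    (1 - gamma)^-1 * (\sum_s \sum_a occ P d0 gamma pistar_lam s a * err s a
                      - \sum_s \sum_a occ P d0 gamma pih s a * err s a).
  exact: soft_value_gap.
have {}gap : J_lam P Rw d0 gamma lam pistar_lam - J_lam P Rw d0 gamma lam pih <=
    (1 - gamma)^-1 * (2 * Num.sqrt Cc * f).
  apply: le_trans gap _; apply: ler_wpM2l; first by rewrite invr_ge0 subr_ge0 ltW.
  have := ler_norm (\sum_s \sum_a occ P d0 gamma pistar_lam s a * err s a).
  have := ler_norm (- \sum_s \sum_a occ P d0 gamma pih s a * err s a).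
  rewrite normrN; lra.
case/andP: (J_le_J_lam hs l0 hA) => Hs _.
case/andP: (J_le_J_lam hh l0 hA) => _ Hh.
have -> : 2 * Num.sqrt Cc / (1 - gamma) * f = (1 - gamma)^-1 * (2 * Num.sqrt Cc * f).
  by ring.
lra.
Qed.
End Regret.

Section Concentration.
Variables (R : realType) (T : finType) (p : T -> R) (n : nat).
Hypothesis p0 : forall x, 0 <= p x.
Hypothesis p1 : \sum_x p x = 1.

Local Notation sampleT := {ffun 'I_n -> T}.
Definition prod_prob (D : sampleT) := \prod_i p (D i).

Lemma prod_prob_ge0 D : 0 <= prod_prob D.
Proof. by apply: prodr_ge0 => i _. Qed.

Lemma sum_prod_prob (F : T -> R) :
  \sum_(D : sampleT) \prod_i F (D i) = (\sum_x F x) ^+ n.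
Proof.
rewrite -(bigA_distr_bigA (fun (i : 'I_n) (x : T) => F x)) /=.
by rewrite prodr_const card_ord.
Qed.

Lemma prod_prob_sum1 : \sum_D prod_prob D = 1.
Proof. by rewrite sum_prod_prob p1 expr1n. Qed.

(* Quadratic upper bound of exp on ]-oo, 1/2]: the moment-generating step. *)
Lemma expR_le_quad (z : R) : z <= 1/2 -> expR z <= 1 + z + 2 * z ^+ 2.
Proof.
move=> hz; have h1 : 0 < 1 - z by lra.
have h3 : expR z <= (1 - z)^-1.
  rewrite -[expR z]invrK lef_pV2 ?posrE ?invr_gt0 ?expR_gt0 // -expRN.
  by have := expR_ge1Dx (- z).
apply: le_trans h3 _; rewrite -[X in X <= _]mul1r ler_pdivrMr //.
have : 0 <= z ^+ 2 * (1 - 2 * z) by apply: mulr_ge0; [apply: sqr_ge0 | lra].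
nra.
Qed.

Lemma chernoff_bound (Z : T -> R) (l : R) : (forall x, Z x <= 1/2) ->
  \sum_(D : sampleT | n%:R * (\sum_x p x * Z x + 2 * \sum_x p x * Z x ^+ 2) + l
     <= \sum_i Z (D i)) prod_prob D <= expR (- l).
Proof.
move=> hZ; set m := \sum_x p x * Z x; set v := \sum_x p x * Z x ^+ 2.
set thr := n%:R * (m + 2 * v) + l.
apply: le_trans (_ : \sum_(D : sampleT) prod_prob D * expR (\sum_i Z (D i) - thr) <= _).
  rewrite [X in _ <= X](bigID (fun D : sampleT => thr <= \sum_i Z (D i))) /=.
  apply: le_trans (_ : _ <= \sum_(D : sampleT | thr <= \sum_i Z (D i))
      prod_prob D * expR (\sum_i Z (D i) - thr)) _.
    apply: ler_sum => D hD; rewrite -[X in X <= _]mulr1 ler_wpM2l ?prod_prob_ge0 //.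
    by apply: le_trans (expR_ge1Dx _); rewrite lerDl subr_ge0.
  by rewrite lerDl; apply: sumr_ge0 => D _; rewrite mulr_ge0 ?prod_prob_ge0 ?expR_ge0.
have mgf : \sum_x p x * expR (Z x) <= expR (m + 2 * v).
  apply: le_trans (expR_ge1Dx _).
  have <- : \sum_x p x * (1 + Z x + 2 * Z x ^+ 2) = 1 + (m + 2 * v).
    transitivity (\sum_x (p x + p x * Z x + 2 * (p x * Z x ^+ 2))).
      by apply: eq_bigr => x _; ring.
    by rewrite !big_split /= p1 -mulr_sumr addrA.
  by apply: ler_sum => x _; rewrite ler_wpM2l // expR_le_quad.
have -> : \sum_(D : sampleT) prod_prob D * expR (\sum_i Z (D i) - thr) =
    expR (- thr) * (\sum_x p x * expR (Z x)) ^+ n.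
  rewrite -sum_prod_prob mulr_sumr; apply: eq_bigr => D _.
  by rewrite expRD expR_sum big_split /= /prod_prob; ring.
have mgf0 : 0 <= \sum_x p x * expR (Z x).
  by apply: sumr_ge0 => x _; rewrite mulr_ge0 ?expR_ge0.
apply: le_trans (ler_wpM2l (expR_ge0 _) (lerXn2r _ _ _ mgf)) _.
- by rewrite nnegrE.
- by rewrite nnegrE expR_ge0.
by rewrite -expRM_natl -expRD /thr le_eqVlt; apply/orP; left; apply/eqP;
  congr expR; ring.
Qed.

Lemma has_count_ge1 (I : Type) (ev : I -> bool) (idx : seq I) :
  has ev idx -> 1 <= \sum_(i <- idx) (ev i)%:R :> R.
Proof.
elim: idx => [//|i idx IH] /=; rewrite big_cons.
case: (ev i) => /= H; last by rewrite add0r IH.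
by rewrite lerDl; apply: sumr_ge0 => j _; case: (ev j).
Qed.

Lemma union_bound (I : eqType) (ev : I -> sampleT -> bool) (idx : seq I)
    (E : sampleT -> bool) (eta : R) :
  (forall D, ~~ E D -> has (fun i => ev i D) idx) ->
  (forall i, i \in idx -> \sum_(D : sampleT | ev i D) prod_prob D <= eta) ->
  1 - (size idx)%:R * eta <= \sum_(D : sampleT | E D) prod_prob D.
Proof.
move=> hcov hev.
have S1 := prod_prob_sum1; rewrite (bigID E) /= in S1.
suff : \sum_(D : sampleT | ~~ E D) prod_prob D <= (size idx)%:R * eta by lra.
apply: le_trans (_ : _ <= \sum_(D : sampleT) \sum_(i <- idx)
    (ev i D)%:R * prod_prob D) _.
  apply: le_trans (_ : _ <= \sum_(D : sampleT | ~~ E D) \sum_(i <- idx)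
      (ev i D)%:R * prod_prob D) _.
    apply: ler_sum => D hD; rewrite -mulr_suml -[X in X <= _]mul1r.
    by rewrite ler_wpM2r ?prod_prob_ge0 //; apply: has_count_ge1; apply: hcov.
  rewrite [X in _ <= X](bigID (fun D => ~~ E D)) /= lerDl.
  apply: sumr_ge0 => D _; apply: sumr_ge0 => i _.
  by apply: mulr_ge0; [case: (ev i D) | exact: prod_prob_ge0].
rewrite exchange_big /=.
have H i : i \in idx -> \sum_(D : sampleT) (ev i D)%:R * prod_prob D <= eta.
  move=> hi; apply: le_trans (hev i hi); rewrite [X in _ <= X]big_mkcond /=.
  by apply: ler_sum => D _; case: (ev i D); rewrite ?mul1r ?mul0r.
elim: idx H {hcov hev} => [|i idx IH] H; first by rewrite big_nil mul0r.
rewrite big_cons /= -addn1 natrD mulrDl mul1r addrC.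
apply: lerD; first by apply: IH => j hj; apply: H; rewrite inE hj orbT.
by apply: H; rewrite mem_head.
Qed.
End Concentration.

Section ListExtrema.
Variable R : realType.

Lemma big_select_attained (T : eqType) (op : R -> R -> R) (x0 : R) (l : seq T)
    (f : T -> R) :
  (forall x y, op x y = x \/ op x y = y) ->
  \big[op/x0]_(x <- l) f x = x0 \/
  exists2 x, x \in l & \big[op/x0]_(x <- l) f x = f x.
Proof.
move=> sel; elim: l => [|z l IH]; first by left; rewrite big_nil.
rewrite !big_cons; case: (sel (f z) (\big[op/x0]_(x <- l) f x)) => ->.
  by right; exists z; rewrite ?mem_head.
by case: IH => [->|[x hx ->]]; [left | right; exists x; rewrite // inE hx orbT].
Qed.

Lemma maxl_ge (T : eqType) (d : T) l (f : T -> R) y : y \in l -> f y <= maxl d l f.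
Proof. by move=> yl; apply: le_bigmax_seq. Qed.

Lemma minl_attained (T : eqType) (d : T) l (f : T -> R) : l != [::] ->
  exists2 x, x \in l & minl d l f = f x.
Proof.
case: l => [//|z l] _; rewrite /minl /=.
have sel (x y : R) : Num.min x y = x \/ Num.min x y = y.
  by case: (leP x y) => _; [left | right].
by case: (big_select_attained (f z) (z :: l) f sel) => [->|//]; exists z; rewrite ?mem_head.
Qed.

Lemma maxl_attained (T : eqType) (d : T) l (f : T -> R) : l != [::] ->
  exists2 x, x \in l & maxl d l f = f x.
Proof.
case: l => [//|z l] _; rewrite /maxl /=.
have sel (x y : R) : Num.max x y = x \/ Num.max x y = y.
  by case: (leP x y) => _; [right | left].
by case: (big_select_attained (f z) (z :: l) f sel) => [->|//]; exists z; rewrite ?mem_head.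
Qed.
End ListExtrema.

Section SampleLosses.
Variables (R : realType) (S A : finType).
Variables (P : S -> A -> S -> R) (Rw : S -> A -> R) (mu : S -> A -> R) (gamma lam : R).
Hypothesis hP : is_kernel P.
Hypothesis hmu : is_dist_SA mu.

Definition sample_prob (x : sample S A) := mu x.1.1 x.1.2 * P x.1.1 x.1.2 x.2.
Definition target (pi : polT R S A) (V : valT R S) (x : sample S A) :=
  Rw x.1.1 x.1.2 + gamma * V x.2 - lam * ln (pi x.1.1 x.1.2).
Definition loss_gap (V : valT R S) (pi g : polT R S A) (x : sample S A) :=
  (V x.1.1 - target pi V x) ^+ 2 - (g x.1.1 x.1.2 - target pi V x) ^+ 2.
Definition bellman_res (V : valT R S) (pi : polT R S A) :=
  sqnorm mu (fun s a => V s - cons_op P Rw gamma lam pi V s a).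
Definition fit_res (V : valT R S) (pi g : polT R S A) :=
  sqnorm mu (fun s a => g s a - cons_op P Rw gamma lam pi V s a).
Definition in_range (W : R) (V : valT R S) (pi g : polT R S A) : Prop :=
  [/\ forall s, 0 <= V s <= W, forall s a, 0 <= g s a <= 2 * W &
      forall x, 0 <= target pi V x <= 2 * W].

Lemma sum_sample (F : sample S A -> R) :
  \sum_(x : sample S A) F x = \sum_s \sum_a \sum_s' F ((s, a), s').
Proof.
rewrite (eq_bigr (fun x => F (x.1, x.2))); last by case.
rewrite -(pair_bigA _ (fun q s' => F (q, s'))) /=.
rewrite (eq_bigr (fun q => \sum_s' F ((q.1, q.2), s'))); last by case.
by rewrite -(pair_bigA _ (fun s a => \sum_s' F ((s, a), s'))).
Qed.

Lemma sample_prob_ge0 x : 0 <= sample_prob x.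
Proof. by apply: mulr_ge0; [case: hmu | case: (hP x.1.1 x.1.2)]. Qed.

Lemma sum_next_state (s : S) (a : A) (F : S -> A -> R) :
  \sum_s' sample_prob ((s, a), s') * F s a = mu s a * F s a.
Proof.
by rewrite -mulr_suml /sample_prob /= -mulr_sumr; case: (hP s a) => _ ->; rewrite mulr1.
Qed.

Lemma sample_prob_sum1 : \sum_x sample_prob x = 1.
Proof.
case: hmu => _ <-; rewrite sum_sample; apply: eq_bigr => s _; apply: eq_bigr => a _.
by rewrite /sample_prob /= -mulr_sumr; case: (hP s a) => _ ->; rewrite mulr1.
Qed.

Lemma emp_loss_gapE n (D : dataset S A n) V pi g :
  loss_L Rw gamma lam D V pi - loss_R Rw gamma lam D g V pi =
  (\sum_i loss_gap V pi g (D i)) / n%:R.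
Proof.
rewrite /loss_L /loss_R -mulrBr -sumrB mulrC; congr (_ * _); apply: eq_bigr => i _.
by rewrite /loss_gap /target; congr (_ - _); congr (_ ^+ 2); ring.
Qed.

Lemma bellman_res_ge0 V pi : 0 <= bellman_res V pi.
Proof. by apply: weighted_sqsum_ge0; case: hmu. Qed.

Lemma fit_res_ge0 V pi g : 0 <= fit_res V pi g.
Proof. by apply: weighted_sqsum_ge0; case: hmu. Qed.

Lemma target_mean pi V s a :
  \sum_s' P s a s' * target pi V ((s, a), s') = cons_op P Rw gamma lam pi V s a.
Proof.
case: (hP s a) => _ h1; rewrite /target /cons_op /PV /=.
transitivity (\sum_s' (P s a s' * (Rw s a - lam * ln (pi s a))
                       + gamma * (P s a s' * V s'))).
  by apply: eq_bigr => s' _; ring.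
by rewrite big_split /= -mulr_suml -mulr_sumr h1; ring.
Qed.

(* Mean of the loss difference: the bias of the squared regression target
   cancels between the two terms. *)
Lemma loss_gap_mean V pi g :
  \sum_x sample_prob x * loss_gap V pi g x = bellman_res V pi - fit_res V pi g.
Proof.
rewrite sum_sample /bellman_res /fit_res /sqnorm -sumrB; apply: eq_bigr => s _.
rewrite -sumrB; apply: eq_bigr => a _ /=.
transitivity (mu s a * ((V s - g s a) * (V s + g s a)) -
   mu s a * (2 * (V s - g s a)) * \sum_s' P s a s' * target pi V ((s, a), s')).
  rewrite mulr_sumr -(sum_next_state s a (fun s a => (V s - g s a) * (V s + g s a))).
  by rewrite -sumrB; apply: eq_bigr => s' _; rewrite /loss_gap /sample_prob /=; ring.
by rewrite target_mean; ring.
Qed.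

(* Pointwise bounds: X = (v - g)(v + g - 2y) with v in [0,W], g, y in [0,2W]. *)
Lemma loss_gap_pointwise (W v g y : R) :
  0 <= v <= W -> 0 <= g <= 2 * W -> 0 <= y <= 2 * W ->
  ((v - y) ^+ 2 - (g - y) ^+ 2) ^+ 2 <= 16 * W ^+ 2 * (v - g) ^+ 2 /\
  `|(v - y) ^+ 2 - (g - y) ^+ 2| <= 8 * W ^+ 2.
Proof.
move=> /andP [v0 v1] /andP [g0 g1] /andP [y0 y1].
have -> : (v - y) ^+ 2 - (g - y) ^+ 2 = (v - g) * (v + g - 2 * y) by ring.
have h1 : (v + g - 2 * y) ^+ 2 <= 16 * W ^+ 2.
  have : -4 * W <= v + g - 2 * y <= 3 * W by apply/andP; split; lra.
  by move=> /andP [a b]; nra.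
have h2 : (v - g) ^+ 2 <= 4 * W ^+ 2.
  have : - 2 * W <= v - g <= W by apply/andP; split; lra.
  by move=> /andP [a b]; nra.
split; first by rewrite exprMn mulrC; apply: ler_wpM2r => //; exact: sqr_ge0.
rewrite -(@ler_pXn2r _ 2) ?nnegrE ?normr_ge0 //; last by nra.
rewrite real_normK ?num_real // exprMn.
have : (v - g) ^+ 2 * (v + g - 2 * y) ^+ 2 <= 4 * W ^+ 2 * (16 * W ^+ 2).
  apply: le_trans (ler_wpM2r (sqr_ge0 _) h2) _.
  by apply: ler_wpM2l => //; nra.
nra.
Qed.

Lemma loss_gap_abs W V pi g x : in_range W V pi g -> `|loss_gap V pi g x| <= 8 * W ^+ 2.
Proof. by case=> hV hg hy; case: (loss_gap_pointwise (hV x.1.1) (hg x.1.1 x.1.2) (hy x)). Qed.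

Lemma loss_gap_mom2 W V pi g : in_range W V pi g ->
  \sum_x sample_prob x * loss_gap V pi g x ^+ 2 <=
  32 * W ^+ 2 * (bellman_res V pi + fit_res V pi g).
Proof.
case=> hV hg hy.
have -> : 32 * W ^+ 2 * (bellman_res V pi + fit_res V pi g) =
  \sum_s \sum_a mu s a * (32 * W ^+ 2 * ((V s - cons_op P Rw gamma lam pi V s a) ^+ 2
     + (g s a - cons_op P Rw gamma lam pi V s a) ^+ 2)).
  rewrite /bellman_res /fit_res /sqnorm -big_split mulr_sumr /=; apply: eq_bigr => s _.
  by rewrite -big_split mulr_sumr /=; apply: eq_bigr => a _; ring.
rewrite sum_sample; apply: ler_sum => s _; apply: ler_sum => a _.
set c := cons_op _ _ _ _ _ _ _ _.
apply: le_trans (_ : _ <= \sum_s' sample_prob ((s, a), s') *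
    (16 * W ^+ 2 * (V s - g s a) ^+ 2)) _.
  apply: ler_sum => s' _; apply: ler_wpM2l; first exact: sample_prob_ge0.
  by case: (loss_gap_pointwise (hV s) (hg s a) (hy ((s, a), s'))).
rewrite (sum_next_state s a (fun s a => 16 * W ^+ 2 * (V s - g s a) ^+ 2)); apply: ler_wpM2l; first by case: hmu.
have : (V s - g s a) ^+ 2 <= 2 * ((V s - c) ^+ 2 + (g s a - c) ^+ 2).
  have -> : V s - g s a = (V s - c) - (g s a - c) by ring.
  set u := V s - c; set w := g s a - c.
  by have := sqr_ge0 (u + w); nra.
by have := sqr_ge0 W; nra.
Qed.
End SampleLosses.

Lemma no_deviation_mean_le (R : realType) (nn th Sx m M2 l B : R) : 0 < nn -> 0 < th ->
  ~~ (nn * (th * m + 2 * (th ^+ 2 * M2)) + l <= th * Sx) -> M2 <= B ->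
  Sx / nn < m + 2 * th * B + l / (nn * th).
Proof.
move=> n0 t0; rewrite -ltNge => H hB.
have nt : 0 < nn * th by apply: mulr_gt0.
have E : Sx / nn - (m + 2 * th * M2 + l / (nn * th)) =
    (th * Sx - (nn * (th * m + 2 * (th ^+ 2 * M2)) + l)) / (nn * th).
  by field; rewrite !gt_eqF.
have : Sx / nn - (m + 2 * th * M2 + l / (nn * th)) < 0.
  by rewrite E pmulr_llt0 ?invr_gt0 // subr_lt0.
have : 2 * th * M2 <= 2 * th * B by rewrite ler_wpM2l // mulr_ge0 // ltW.
lra.
Qed.

Section Deviations.
Variables (R : realType) (S A : finType).
Variables (P : S -> A -> S -> R) (Rw : S -> A -> R) (mu : S -> A -> R) (gamma lam : R).
Hypothesis hP : is_kernel P.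
Hypothesis hmu : is_dist_SA mu.
Variables (n : nat) (W ell : R).

Let X := loss_gap Rw gamma lam.
Let p := sample_prob P mu.
Definition dev_rate : R := (256 * W ^+ 2)^-1.

(* The one-sided deviation event, upper or lower according to the sign of th:
   th * sum_i X(x_i) >= n (th E X + 2 th^2 E X^2) + ell. *)
Definition deviates (upper : bool) (V : valT R S) (pi g : polT R S A)
    (D : dataset S A n) : bool :=
  let th := if upper then dev_rate else - dev_rate in
  n%:R * (th * \sum_x p x * X V pi g x + 2 * (dev_rate ^+ 2 * \sum_x p x * X V pi g x ^+ 2))
    + ell <= th * \sum_i X V pi g (D i).

(* Chernoff: each deviation event has probability at most exp(-ell), since
   |th X| <= th 8 W^2 <= 1/2. *)
Lemma deviation_prob (upper : bool) V pi g : in_range Rw gamma lam W V pi g ->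
  \sum_(D : dataset S A n | deviates upper V pi g D) data_prob P mu D <= expR (- ell).
Proof.
move=> hr.
have rate0 : 0 <= dev_rate by rewrite invr_ge0 mulr_ge0 // sqr_ge0.
have th2 : (if upper then dev_rate else - dev_rate) ^+ 2 = dev_rate ^+ 2.
  by case: (upper); rewrite ?sqrrN.
have thn : `|if upper then dev_rate else - dev_rate| = dev_rate.
  by case: (upper); rewrite ?normrN ger0_norm.
set th := if upper then dev_rate else - dev_rate in th2 thn *.
have small : `|th| * (8 * W ^+ 2) <= 1 / 2.
  rewrite thn; have [->|W0] := eqVneq W 0; first by rewrite expr0n /= !mulr0.
  have -> : dev_rate * (8 * W ^+ 2) = 1 / 32 by rewrite /dev_rate; field.
  lra.
have hZ x : th * X V pi g x <= 1 / 2.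
  apply: le_trans (ler_norm _) _; rewrite normrM; apply: le_trans small.
  by rewrite ler_wpM2l // (loss_gap_abs _ hr).
have := chernoff_bound n (sample_prob_ge0 hP hmu) (sample_prob_sum1 hP hmu) ell hZ.
have e1 : \sum_x p x * (th * X V pi g x) = th * \sum_x p x * X V pi g x.
  by rewrite mulr_sumr; apply: eq_bigr => x _; rewrite mulrCA.
have e2 : \sum_x p x * (th * X V pi g x) ^+ 2 =
    dev_rate ^+ 2 * \sum_x p x * X V pi g x ^+ 2.
  by rewrite -th2 mulr_sumr; apply: eq_bigr => x _; rewrite exprMn mulrCA.
have e3 (D : dataset S A n) : \sum_i th * X V pi g (D i) = th * \sum_i X V pi g (D i).
  by rewrite mulr_sumr.
by rewrite e1 e2; under eq_bigl do rewrite e3.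
Qed.


Section NoDeviation.
Variables (V : valT R S) (pi g : polT R S A) (D : dataset S A n).
Hypothesis n_gt0 : (0 < n)%N.
Hypothesis W_gt0 : 0 < W.
Hypothesis hr : in_range Rw gamma lam W V pi g.

Let f := bellman_res P Rw mu gamma lam V pi.
Let h := fit_res P Rw mu gamma lam V pi g.
Let emp := loss_L Rw gamma lam D V pi - loss_R Rw gamma lam D g V pi.

Lemma no_deviation_rate (Sx m : R) :
  ~~ (n%:R * (dev_rate * m + 2 * (dev_rate ^+ 2 * \sum_x p x * X V pi g x ^+ 2))
      + ell <= dev_rate * Sx) ->
  Sx / n%:R < m + (f + h) / 4 + 256 * (W ^+ 2 * ell / n%:R).
Proof.
move=> nd; have nn0 : 0 < (n%:R : R) by rewrite ltr0n.
have th0 : 0 < dev_rate by rewrite invr_gt0 mulr_gt0 // exprn_gt0.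
have := no_deviation_mean_le nn0 th0 nd (loss_gap_mom2 hP hmu hr).
have -> : 2 * dev_rate * (32 * W ^+ 2 * (f + h)) = (f + h) / 4.
  by rewrite /dev_rate; field; rewrite gt_eqF.
by have -> : ell / (n%:R * dev_rate) = 256 * (W ^+ 2 * ell / n%:R)
  by rewrite /dev_rate; field; rewrite !gt_eqF.
Qed.

Lemma emp_gap_upper : ~~ deviates true V pi g D ->
  emp < f - h + (f + h) / 4 + 256 * (W ^+ 2 * ell / n%:R).
Proof.
move=> nd; rewrite /emp emp_loss_gapE -/X -(loss_gap_mean _ _ _ _ hP).
exact: no_deviation_rate.
Qed.

Lemma emp_gap_lower : ~~ deviates false V pi g D ->
  f - h - (f + h) / 4 - 256 * (W ^+ 2 * ell / n%:R) < emp.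
Proof.
rewrite /deviates /= => nd.
have := @no_deviation_rate (- \sum_i X V pi g (D i)) (- \sum_x p x * X V pi g x).
rewrite !mulrN -!mulNr => /(_ nd).
rewrite /emp emp_loss_gapE -/X -(loss_gap_mean _ _ _ _ hP) mulNr; lra.
Qed.
End NoDeviation.
End Deviations.

Lemma prob_event_mono (R : realType) (S A : finType) (P : S -> A -> S -> R)
    (mu : S -> A -> R) n (E1 E2 : dataset S A n -> Prop) :
  is_kernel P -> is_dist_SA mu -> (forall D, E1 D -> E2 D) ->
  prob_event P mu E1 <= prob_event P mu E2.
Proof.
move=> hP hmu E12.
rewrite /prob_event [X in _ <= X](bigID (fun D => `[< E1 D >])) /= -[X in X <= _]addr0.
apply: lerD.
  rewrite le_eqVlt; apply/orP; left; apply/eqP; apply: eq_bigl => D.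
  by case: (asboolP (E1 D)) => [/E12/asboolP ->|]; rewrite ?andbF.
by apply: sumr_ge0 => D _; exact: (prod_prob_ge0 (sample_prob_ge0 hP hmu)).
Qed.

Lemma sqrt_residual_le (R : realType) (fh a b u : R) :
  0 <= a -> 0 <= b -> 0 <= u -> fh <= 2 * (a + b) + 768 * u ->
  Num.sqrt fh <= 32 * (Num.sqrt a + Num.sqrt b + Num.sqrt u).
Proof.
move=> a0 b0 u0 H.
have s1 := sqrtr_ge0 a; have s2 := sqrtr_ge0 b; have s3 := sqrtr_ge0 u.
have q1 := sqr_sqrtr a0; have q2 := sqr_sqrtr b0; have q3 := sqr_sqrtr u0.
rewrite -[X in _ <= X]ger0_norm ?mulr_ge0 ?addr_ge0 // -sqrtr_sqr ler_sqrt ?sqr_ge0 //.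
apply: le_trans H _.
have -> : 2 * (a + b) + 768 * u =
    2 * (Num.sqrt a ^+ 2 + Num.sqrt b ^+ 2) + 768 * Num.sqrt u ^+ 2.
  by rewrite q1 q2 q3.
move: (Num.sqrt a) (Num.sqrt b) (Num.sqrt u) s1 s2 s3 => x y z x0 y0 z0.
have := mulr_ge0 x0 y0; have := mulr_ge0 x0 z0; have := mulr_ge0 y0 z0.
nra.
Qed.

Section SBEEDAnalysis.
Variables (R : realType) (S A : finType) (gamma : R) (P : S -> A -> S -> R)
  (Rw : S -> A -> R) (Rmax : R) (mu : S -> A -> R) (lam delta : R) (n : nat)
  (Vs : seq (valT R S)) (Ps Gs : seq (polT R S A)).
Hypothesis hA : (0 < #|A|)%N.
Hypothesis hg : 0 <= gamma < 1.
Hypothesis hP : is_kernel P.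
Hypothesis hRw : forall s a, 0 <= Rw s a <= Rmax.
Hypothesis hmu : is_dist_SA mu.
Hypothesis hlam : 0 < lam.
Hypothesis hdelta : 0 < delta < 1.
Hypothesis hn : (0 < n)%N.
Hypotheses (hVn : Vs != [::]) (hPn : Ps != [::]) (hGn : Gs != [::]).

Let Vmax := (Rmax + lam * ln (#|A|%:R)) / (1 - gamma).
Hypothesis hV : forall V, V \in Vs -> forall s, 0 <= V s <= Vmax.
Hypothesis hPi : forall pi, pi \in Ps -> is_policy pi /\
  forall s a, 0 < pi s a /\ `|ln (pi s a)| <= Vmax / lam.
Hypothesis hG : forall g, g \in Gs -> forall s a, 0 <= g s a <= 2 * Vmax.
Variables (d0 : S -> R) (pistar pistar_lam : polT R S A).
Hypothesis hd0 : is_dist_S d0.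
Hypothesis hps : is_policy pistar.
Hypothesis hpsl : is_policy pistar_lam.
Hypothesis hJlmax : forall pi, is_policy pi ->
  J_lam P Rw d0 gamma lam pi <= J_lam P Rw d0 gamma lam pistar_lam.
Hypothesis hC2 : C2_finite P d0 gamma mu Ps pistar_lam.

Let kk : R := (size Vs)%:R * (size Ps)%:R * (size Gs)%:R.
Let ell := ln (kk / delta).
Let u := Vmax ^+ 2 * ell / n%:R.
Let eG := eps_GVP P Rw mu gamma lam Vs Ps Gs.
Let eV := eps_VP P Rw mu gamma lam Vs Ps.
Let pairs := [seq (V, p) | V <- Vs, p <- Ps].
Let f := bellman_res P Rw mu gamma lam.
Let h := fit_res P Rw mu gamma lam.

Lemma ln_card_ge0 : 0 <= ln (#|A|%:R : R).
Proof. by apply: ln_ge0; rewrite ler1n. Qed.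

(* mu is a distribution, so S is nonempty; rewards are then bounded below
   by 0 <= Rmax. *)
Lemma Rmax_ge0 : 0 <= Rmax.
Proof.
have [s0 _] : exists s0 : S, true.
  case: (pickP (@predT S)) => [s0 _|none]; first by exists s0.
  by case: hmu => _; rewrite big_pred0 // => /eqP; rewrite eq_sym oner_eq0.
have [a0 _] := card_gt0P hA.
by case/andP: (hRw s0 a0) => r0; apply: le_trans.
Qed.

Lemma Vmax_ge0 : 0 <= Vmax.
Proof.
case/andP: hg => _ g1; apply: divr_ge0; last by rewrite subr_ge0 ltW.
by rewrite addr_ge0 ?Rmax_ge0 // mulr_ge0 ?ln_card_ge0 // ltW.
Qed.

Lemma classes_in_range V pi g : V \in Vs -> pi \in Ps -> g \in Gs ->
  in_range Rw gamma lam Vmax V pi g.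
Proof.
move=> hVi hpi hgi; split; [exact: hV | exact: hG | move=> [[s a] s'] /=].
have [hpol hpos] := hPi hpi; have [pp hl] := hpos s a.
have lnle : ln (pi s a) <= 0 by apply: ln_le0; apply: policy_le1.
have hl' : lam * (- ln (pi s a)) <= Vmax.
  by rewrite -ler0_norm // mulrC -ler_pdivlMr.
have ln0 : 0 <= lam * (- ln (pi s a)) by rewrite mulr_ge0 ?oppr_ge0 // ltW.
have [v0 v1] := andP (hV hVi s'); have [r0 r1] := andP (hRw s a).
case/andP: hg => g0 g1.
have gv1 : gamma * V s' <= gamma * Vmax by apply: ler_wpM2l.
have gv0 : 0 <= gamma * V s' by apply: mulr_ge0.
have hR : Rmax <= Vmax * (1 - gamma).
  rewrite /Vmax divfK; last by rewrite subr_eq0 eq_sym lt_eqF.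
  by rewrite lerDl mulr_ge0 ?ln_card_ge0 // ltW.
rewrite /target /=; apply/andP; split; lra.
Qed.

Lemma pairs_mem vp : vp \in pairs -> vp.1 \in Vs /\ vp.2 \in Ps.
Proof. by case/allpairsP=> [[V pi] [hVi hpi ->]]. Qed.

Lemma pairs_nonempty : pairs != [::].
Proof.
have [V1 V1in] : exists V1, V1 \in Vs.
  by move: hVn; case: (Vs) => [//|V1 ?] _; exists V1; rewrite mem_head.
have [p1 p1in] : exists p1, p1 \in Ps.
  by move: hPn; case: (Ps) => [//|p1 ?] _; exists p1; rewrite mem_head.
have : (V1, p1) \in pairs by apply: allpairs_f.
by apply: contraTneq => ->.
Qed.

Lemma eps_VP_attained : exists2 vp0, vp0 \in pairs & eV = f vp0.1 vp0.2.
Proof.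
have [vp0 vp0in eVE] := minl_attained (V0 R S, pol0 R S A)
  (fun vp : valT R S * polT R S A => f vp.1 vp.2) pairs_nonempty.
by exists vp0.
Qed.

Lemma eV_ge0 : 0 <= eV.
Proof. by have [vp0 _ ->] := eps_VP_attained; apply: bellman_res_ge0. Qed.

Lemma best_fit_exists (vp : valT R S * polT R S A) :
  exists g, (g \in Gs) && (minl (pol0 R S A) Gs (h vp.1 vp.2) == h vp.1 vp.2 g).
Proof.
by have [g gin gE] := minl_attained (pol0 R S A) (h vp.1 vp.2) hGn;
  exists g; rewrite gin gE eqxx.
Qed.

Definition best_fit vp : polT R S A := xchoose (best_fit_exists vp).

Lemma best_fit_in vp : best_fit vp \in Gs.
Proof. by case/andP: (xchooseP (best_fit_exists vp)). Qed.

Lemma best_fit_le vp : vp \in pairs -> h vp.1 vp.2 (best_fit vp) <= eG.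
Proof.
move=> vpin; case/andP: (xchooseP (best_fit_exists vp)) => _ /eqP <-.
exact: (maxl_ge (V0 R S, pol0 R S A)
  (fun vp : valT R S * polT R S A => minl (pol0 R S A) Gs (h vp.1 vp.2)) vpin).
Qed.

Lemma eG_ge0 : 0 <= eG.
Proof.
have [vp0 vp0in _] := eps_VP_attained.
by apply: le_trans (best_fit_le vp0in); apply: fit_res_ge0.
Qed.

Lemma kk_ge1 : 1 <= kk.
Proof. by rewrite /kk -!natrM ler1n !muln_gt0 !lt0n !size_eq0 hVn hPn hGn. Qed.

Lemma u_ge0 : 0 <= u.
Proof.
case/andP: hdelta => dl0 dl1.
have ell0 : 0 <= ell.
  by apply: ln_ge0; rewrite ler_pdivlMr // mul1r; apply: le_trans kk_ge1; apply: ltW.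
by rewrite /u divr_ge0 // mulr_ge0 // sqr_ge0.
Qed.

(* The deviation events controlled by the union bound, indexed by
   (upper, ((V, pi), g)): upper deviations of the loss difference for the
   eps_{V,P}-minimizer vp0 against every g in Gs, and lower deviations for
   every other pair against its best fit. *)
Definition dev_event (i : bool * (valT R S * polT R S A * polT R S A))
    (D : dataset S A n) : bool :=
  deviates P Rw mu gamma lam Vmax ell i.1 i.2.1.1 i.2.1.2 i.2.2 D.

Definition dev_index (vp0 : valT R S * polT R S A) :=
  [seq (true, (vp0, g)) | g <- Gs] ++
  [seq (false, (vp, best_fit vp)) | vp <- pairs & vp != vp0].

(* There are |G| + (|V||P| - 1) <= |V||P||G| deviation events. *)
Lemma dev_index_size vp0 : vp0 \in pairs ->
  (size (dev_index vp0) <= size Vs * size Ps * size Gs)%N.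
Proof.
move=> vp0in; rewrite size_cat !size_map size_filter.
have := count_predC (pred1 vp0) pairs; rewrite size_allpairs.
have : (0 < count (pred1 vp0) pairs)%N by rewrite -has_count has_pred1.
have : (0 < size Gs)%N by rewrite lt0n size_eq0.
have -> : count (fun vp => vp != vp0) pairs = count (predC (pred1 vp0)) pairs.
  exact: eq_count.
nia.
Qed.

(* On the good event, the SBEED output has a small Bellman residual: its
   empirical objective is at most that of vp0, and both objectives are within
   (f + h)/4 + 256 u of their means. *)
Lemma residual_on_good_event vp0 (D : dataset S A n) (Vh : valT R S) (ph : polT R S A) :
  0 < Vmax -> vp0 \in pairs -> eV = f vp0.1 vp0.2 ->
  is_sbeed_output Rw gamma lam D Vs Ps Gs Vh ph ->
  (forall i, i \in dev_index vp0 -> ~~ dev_event i D) ->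
  f Vh ph <= 2 * (eG + eV) + 768 * u.
Proof.
move=> W0 vp0in eVE [hVh hph hmin] good.
have := eG_ge0; have := eV_ge0; have := u_ge0.
have [e|ne] := eqVneq (Vh, ph) vp0; first by rewrite eVE -e /=; lra.
have vhin : (Vh, ph) \in pairs by apply: allpairs_f.
have [V0in P0in] := pairs_mem vp0in.
set emp := fun V pi g => loss_L Rw gamma lam D V pi - loss_R Rw gamma lam D g V pi.
have [g1 g1in obj0E] := maxl_attained (pol0 R S A) (emp vp0.1 vp0.2) hGn.
have up : sbeed_obj Rw gamma lam D Gs vp0.1 vp0.2 <
    f vp0.1 vp0.2 - h vp0.1 vp0.2 g1 + (f vp0.1 vp0.2 + h vp0.1 vp0.2 g1) / 4 + 256 * u.
  rewrite /sbeed_obj obj0E.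
  apply: (emp_gap_upper hP hmu hn W0 (classes_in_range V0in P0in g1in)).
  by apply: (good (true, (vp0, g1))); rewrite mem_cat map_f.
set gh := best_fit (Vh, ph).
have lo : f Vh ph - h Vh ph gh - (f Vh ph + h Vh ph gh) / 4 - 256 * u <
    sbeed_obj Rw gamma lam D Gs Vh ph.
  apply: lt_le_trans (maxl_ge (pol0 R S A) (emp Vh ph) (best_fit_in (Vh, ph))).
  apply: (emp_gap_lower hP hmu hn W0 (classes_in_range hVh hph (best_fit_in _))).
  apply: (good (false, ((Vh, ph), gh))).
  by rewrite mem_cat (map_f (fun vp => (false, (vp, best_fit vp)))) ?orbT // mem_filter ne.
have := hmin _ _ V0in P0in.
have : h Vh ph gh <= eG by apply: best_fit_le.
have : 0 <= h vp0.1 vp0.2 g1 by apply: fit_res_ge0.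
rewrite -eVE in up; lra.
Qed.

Lemma residual_Vmax0 V pi : Vmax = 0 -> V \in Vs -> pi \in Ps -> f V pi = 0.
Proof.
move=> W0 hVi hpi; have [_ hpos] := hPi hpi.
have Rmax0 : Rmax = 0.
  have : Vmax * (1 - gamma) = Rmax + lam * ln (#|A|%:R).
    by case/andP: hg => _ g1; rewrite /Vmax divfK // subr_eq0 eq_sym lt_eqF.
  rewrite W0 mul0r; have := Rmax_ge0.
  have : 0 <= lam * ln (#|A|%:R : R) by rewrite mulr_ge0 ?ln_card_ge0 // ltW.
  lra.
have Vz s : V s = 0 by apply/eqP; rewrite eq_le andbC; have := hV hVi s; rewrite W0.
have lz s a : ln (pi s a) = 0.
  by apply/eqP; rewrite -normr_le0; have := (hpos s a).2; rewrite W0 mul0r.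
have Rz s a : Rw s a = 0.
  by apply/eqP; rewrite eq_le andbC; have := hRw s a; rewrite Rmax0.
apply: big1 => s _; apply: big1 => a _.
rewrite /cons_op /PV Vz Rz lz big1 ?mulr0 ?subrr; last by move=> s' _; rewrite Vz mulr0.
by rewrite !(mulr0, addr0, subr0, sub0r, oppr0) expr0n /= mulr0.
Qed.

Lemma residual_whp (alg : dataset S A n -> valT R S * polT R S A) :
  (forall D, is_sbeed_output Rw gamma lam D Vs Ps Gs (alg D).1 (alg D).2) ->
  1 - delta <= prob_event P mu
    (fun D => f (alg D).1 (alg D).2 <= 2 * (eG + eV) + 768 * u).
Proof.
move=> halg; have p0 := sample_prob_ge0 hP hmu; have p1 := sample_prob_sum1 hP hmu.
have [dl0 dl1] := andP hdelta.
have [W0|Wpos] : Vmax = 0 \/ 0 < Vmax.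
  by move: Vmax_ge0; rewrite le_eqVlt => /orP [/eqP <-|]; [left | right].
  rewrite /prob_event (eq_bigl predT) => [|D].
    by rewrite (prod_prob_sum1 n p1) lerBlDr lerDl ltW.
  apply/asboolP => /=; case: (halg D) => hVh hph _.
  have fz : f (alg D).1 (alg D).2 = 0 by apply: residual_Vmax0.
  by rewrite fz; have := eG_ge0; have := eV_ge0; have := u_ge0; lra.
have [vp0 vp0in eVE] := eps_VP_attained.
have kk0 : 0 < kk := lt_le_trans ltr01 kk_ge1.
have expE : expR (- ell) = delta / kk.
  by rewrite expRN /ell lnK ?posrE ?divr_gt0 // invf_div.
apply: le_trans (union_bound p0 p1 (ev := dev_event) (idx := dev_index vp0)
  (eta := delta / kk) _ _).
  rewrite lerD2l lerN2 mulrA ler_pdivrMr // mulrC; apply: ler_wpM2l; first exact: ltW.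
  by rewrite /kk -!natrM ler_nat dev_index_size.
- move=> D; apply: contraR => /hasPn good; apply/asboolP.
  by apply: (residual_on_good_event Wpos vp0in eVE (halg D)) => i /good.
- move=> i; rewrite mem_cat -expE => /orP [] /mapP [x hx ->].
  + have [V0in P0in] := pairs_mem vp0in.
    exact: (deviation_prob hP hmu n ell true (classes_in_range V0in P0in hx)).
  + rewrite mem_filter in hx; case/andP: hx => _ /pairs_mem [hx1 hx2].
    exact: (deviation_prob hP hmu n ell false (classes_in_range hx1 hx2 (best_fit_in x))).
Qed.

Let C := C2 P d0 gamma mu Ps pistar_lam.

Lemma regret_of_residual (V : valT R S) (pih : polT R S A) : pih \in Ps ->
  f V pih <= 2 * (eG + eV) + 768 * u ->
  J P Rw d0 gamma pistar - J P Rw d0 gamma pih <=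
    lam * ln (#|A|%:R) / (1 - gamma)
    + 64 * Num.sqrt C / (1 - gamma) *
        (Num.sqrt eG + Num.sqrt eV + Num.sqrt (Num.sqrt (u * (eG + eV)))
         + Num.sqrt u).
Proof.
move=> hpih hres; have [hpol hpos] := hPi hpih.
have mu0 : forall s a, 0 <= mu s a by case: hmu.
have Cl : conc_term P d0 gamma mu pistar_lam <= C by apply: maxl_ge; rewrite mem_head.
have Ch : conc_term P d0 gamma mu pih <= C by apply: maxl_ge; rewrite inE hpih orbT.
have sup1 := hC2 (mem_head _ _).
have sup2 := hC2 (ltac:(by rewrite inE hpih orbT) : pih \in pistar_lam :: Ps).
have reg : J P Rw d0 gamma pistar - J P Rw d0 gamma pih <=
    lam * ln (#|A|%:R) / (1 - gamma) + 2 * Num.sqrt C / (1 - gamma) * Num.sqrt (f V pih).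
  exact: (regret_le_residual hP hd0 hg V hps hpsl hpol (fun s a => (hpos s a).1)
    (ltW hlam) hA (hJlmax hps) mu0 sup1 sup2 Cl Ch).
apply: le_trans reg _; rewrite lerD2l.
have K0 : 0 <= Num.sqrt C / (1 - gamma).
  by case/andP: hg => _ g1; rewrite divr_ge0 ?sqrtr_ge0 // subr_ge0 ltW.
have sq := sqrt_residual_le eG_ge0 eV_ge0 u_ge0 hres.
set K := Num.sqrt C / (1 - gamma) in K0; rewrite -(mulrA 2) -(mulrA 64) -/K.
set Y := Num.sqrt eG + Num.sqrt eV + Num.sqrt u in sq.
have h1 : K * Num.sqrt (f V pih) <= K * (32 * Y) by apply: ler_wpM2l.
have h2 : K * Y <= K * (Num.sqrt eG + Num.sqrt eV
                        + Num.sqrt (Num.sqrt (u * (eG + eV))) + Num.sqrt u).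
  by apply: ler_wpM2l; rewrite // /Y lerD2r lerDl sqrtr_ge0.
nra.
Qed.
End SBEEDAnalysis.

(* The argument uses pi* only as a
   policy. *)
Unset Implicit Arguments.
Theorem theorem1 (R : realType) :
  exists c : R, 0 < c /\
  forall (S A : finType) (gamma : R) (P : S -> A -> S -> R) (Rw : S -> A -> R)
    (Rmax : R) (d0 : S -> R) (mu : S -> A -> R) (lam delta : R) (n : nat)
    (Vs : seq (valT R S)) (Ps : seq (polT R S A)) (Gs : seq (polT R S A))
    (pistar pistar_lam : polT R S A)
    (alg : dataset S A n -> valT R S * polT R S A),
  (0 < #|A|)%N ->
  0 <= gamma < 1 ->
  is_kernel P ->
  (forall s a, 0 <= Rw s a <= Rmax) ->
  is_dist_S d0 ->
  is_dist_SA mu ->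
  0 < lam ->
  0 < delta < 1 ->
  (0 < n)%N ->
  let Vmax := (Rmax + lam * ln (#|A|%:R)) / (1 - gamma) in
  (* finite function classes *)
  uniq Vs -> uniq Ps -> uniq Gs ->
  Vs != [::] -> Ps != [::] -> Gs != [::] ->
  (forall V, V \in Vs -> forall s, 0 <= V s <= Vmax) ->
  (forall pi, pi \in Ps -> is_policy pi /\
     forall s a, 0 < pi s a /\ `|ln (pi s a)| <= Vmax / lam) ->
  (forall g, g \in Gs -> forall s a, 0 <= g s a <= 2 * Vmax) ->
  (* pi* : deterministic maximizer of J; pi*_lambda : maximizer of J_lambda *)
  is_policy pistar -> is_deterministic pistar ->
  (forall pi, is_policy pi -> J P Rw d0 gamma pi <= J P Rw d0 gamma pistar) ->
  is_policy pistar_lam ->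
  (forall pi, is_policy pi ->
     J_lam P Rw d0 gamma lam pi <= J_lam P Rw d0 gamma lam pistar_lam) ->
  (* C_2 < infinity *)
  C2_finite P d0 gamma mu Ps pistar_lam ->
  (* alg D is an SBEED output computed from D *)
  (forall D, is_sbeed_output Rw gamma lam D Vs Ps Gs (alg D).1 (alg D).2) ->
  let iota := Vmax ^+ 2 *
      ln ((size Vs)%:R * (size Ps)%:R * (size Gs)%:R / delta) in
  let eG := eps_GVP P Rw mu gamma lam Vs Ps Gs in
  let eV := eps_VP P Rw mu gamma lam Vs Ps in
  let C := C2 P d0 gamma mu Ps pistar_lam in
  prob_event P mu (fun D : dataset S A n =>
     J P Rw d0 gamma pistar - J P Rw d0 gamma (alg D).2 <=
       lam * ln (#|A|%:R) / (1 - gamma)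
       + c * Num.sqrt C / (1 - gamma) *
           (Num.sqrt eG + Num.sqrt eV
            + Num.sqrt (Num.sqrt (iota / n%:R * (eG + eV)))
            + Num.sqrt (iota / n%:R)))
  >= 1 - delta.
Proof.
exists 64; split => // S A gamma P Rw Rmax d0 mu lam delta n Vs Ps Gs pistar
  pistar_lam alg hA hg hP hRw hd0 hmu hlam hdelta hn Vmax _ _ _ hVn hPn hGn hV hPi hG
  hps _ _ hpsl hJlmax hC2 halg; cbv zeta.
apply: le_trans (residual_whp hA hg hP hRw hmu hlam hdelta hn hVn hPn hGn hV hPi hG halg) _.
apply: prob_event_mono => // D hres; have [_ hpih _] := halg D.
exact: (regret_of_residual hA hg hP hmu hlam hdelta hVn hPn hGn hPi hd0 hps hpsl
  hJlmax hC2 hpih hres).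
Qed.
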